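(* Let $V$ be a finite-dimensional real vector space, $M$ a smooth manifold, $f\colon M\to V$ a smooth function, and $x_1,\ldots,x_m$ points of $M$ such that $0$ lies in the interior of the convex hull of $f(x_1),\ldots,f(x_m)$ and \[V=df_{x_1}T_{x_1}(M)+\cdots+df_{x_m}T_{x_m}(M).\] Then, for all $n$ sufficiently large, there exist $z_1,\ldots,z_n\in M$ such that $\sum_{i=1}^n f(z_i)=0$ and \[V=df_{z_1}T_{z_1}(M)+\cdots+df_{z_n}T_{z_n}(M).\]
   Context: Here $df_x\colon T_x(M)\to V$ denotes the differential of $f$ at $x$. *)

From HB Require Import structures.
From mathcomp Require Import all_boot all_order all_algebra.
From mathcomp Require Import all_classical all_reals all_analysis.
Set Implicit Arguments. Unset Strict Implicit. Unset Printing Implicit Defensive.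
Import Order.TTheory GRing.Theory Num.Theory.
Import numFieldNormedType.Exports.
Local Open Scope classical_set_scope.
Local Open Scope ring_scope.

Section Defs.
Variable R : realType.

Fixpoint iter_dd (U W : normedModType R) (vs : seq U) (g : U -> W) : U -> W :=
  match vs with
  | [::] => g
  | v :: vs' => fun x => 'D_v (iter_dd vs' g) x
  end.

Definition smooth_on (U W : normedModType R) (A : set U) (g : U -> W) : Prop :=
  open A /\
  forall vs : seq U, forall x, A x ->
    {for x, continuous (iter_dd vs g)} /\ forall v, derivable (iter_dd vs g) x v.

Record smooth_manifold (M : topologicalType) (k : nat) := SmoothManifold {
  chart_idx : Type;
  chart_dom : chart_idx -> set M;
  chart : chart_idx -> M -> 'rV[R]_k;
  chart_inv : chart_idx -> 'rV[R]_k -> M;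
  man_hausdorff : hausdorff_space M;
  man_second_countable : @second_countable M;
  chart_dom_open : forall c, open (chart_dom c);
  chart_cover : forall x : M, exists c, chart_dom c x;
  chart_img_open : forall c, open (chart c @` chart_dom c);
  chartK : forall c x, chart_dom c x -> chart_inv c (chart c x) = x;
  chart_invK : forall c y, (chart c @` chart_dom c) y ->
    chart_dom c (chart_inv c y) /\ chart c (chart_inv c y) = y;
  chart_cont : forall c x, chart_dom c x -> {for x, continuous (chart c)};
  chart_inv_cont : forall c y, (chart c @` chart_dom c) y ->
    {for y, continuous (chart_inv c)};
  chart_trans_smooth : forall c c',
    smooth_on (chart c @` (chart_dom c `&` chart_dom c'))
              (chart c' \o chart_inv c)
}.

Arguments chart_dom {M k} s c.
Arguments chart {M k} s c.
Arguments chart_inv {M k} s c.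

Variables (M : topologicalType) (k : nat) (A : smooth_manifold M k).

Definition smooth_map (W : normedModType R) (f : M -> W) : Prop :=
  forall c, smooth_on (chart A c @` chart_dom A c) (f \o chart_inv A c).

(* df_x T_x(M): the image of the differential of f at x, computed in a chart
   around x as the set of directional derivatives of f o chart^-1. *)
Definition dimage (W : normedModType R) (f : M -> W) (x : M) : set W :=
  [set w | exists c, chart_dom A c x /\
     exists v : 'rV[R]_k, w = 'D_v (f \o chart_inv A c) (chart A c x)].

Definition dimages_span (d m : nat) (f : M -> 'rV[R]_d) (x : 'I_m -> M) : Prop :=
  forall w : 'rV[R]_d, exists ws : 'I_m -> 'rV[R]_d,
    (forall i, dimage f (x i) (ws i)) /\ w = \sum_(i < m) ws i.

End Defs.

Definition conv_hull (R : realType) (d m : nat) (p : 'I_m -> 'rV[R]_d)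
  : set 'rV[R]_d :=
  [set y | exists l : 'I_m -> R, (forall i, 0 <= l i) /\
     \sum_(i < m) l i = 1 /\ y = \sum_(i < m) l i *: p i].

From HB Require Import structures.
From mathcomp Require Import all_boot all_order all_algebra.
From mathcomp Require Import all_classical all_reals all_analysis.
From mathcomp Require Import lra zify.
Set Implicit Arguments. Unset Strict Implicit. Unset Printing Implicit Defensive.
Import Order.TTheory GRing.Theory Num.Theory.
Import numFieldNormedType.Exports.
Local Open Scope classical_set_scope.
Local Open Scope ring_scope.

(* Since 0 is interior to the hull, 0 = \sum_j lam_j f(x_j) with every lam_j > 0.
   Write each basis vector e_c of V as \sum_j of differentials at the x_j and move
   x_j along the corresponding chart lines: this gives d curves whose combined map
   s |-> \sum_c \sum_j (f(x_j moved by s_c) - f(x_j)) has the identity as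
   derivative at 0, hence, by a contraction argument, covers a ball of radius r.
   For large n take multiplicities cnt_j, each close to n lam_j, with
   \sum_j cnt_j = n: the error \sum_j cnt_j f(x_j) stays bounded independently of
   n, so it is cancelled by replacing d K copies of each x_j by K copies of moved
   points, for a fixed K.  Every x_j keeps at least one copy, so the differentials
   still span V. *)

Section MatrixNorm.
Variables (R : realDomainType) (a b : nat).

Lemma mx_norm_le (x : 'M[R]_(a, b)) (e : R) :
  0 <= e -> (forall i j, `|x i j| <= e) -> `|x| <= e.
Proof.
move=> e_ge0 xe; rewrite [leLHS]/Num.norm /= mx_normrE.
by apply/bigmax_leP; split => // -[i j] _; apply: xe.
Qed.

Lemma norm_mx_entry_le (x : 'M[R]_(a, b)) i j : `|x i j| <= `|x|.
Proof.
by rewrite [leRHS]/Num.norm /= mx_normrE; apply/bigmax_geP; right; exists (i, j).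
Qed.

End MatrixNorm.

(* Matrices are complete and normed, but the library does not register the
   joint structure, which [banach_fixed_point] needs. *)
HB.instance Definition _ (R : realType) (m n : nat) :=
  Complete.copy 'M[R]_(m, n) 'M[R]_(m, n).

Section RealCurves.
Variable R : realType.

Lemma is_derive_line (V W : normedModType R) (F : V -> W) (y v : V) (t : R) :
  derivable F (y + t *: v) v ->
  is_derive t 1 (fun s : R => F (y + s *: v)) ('D_v F (y + t *: v)).
Proof.
move=> dF.
have quotE : (fun h : R => h^-1 *: (((fun s : R => F (y + s *: v)) \o shift t) (h *: 1)
              - F (y + t *: v))) =
          (fun h : R => h^-1 *: ((F \o shift (y + t *: v)) (h *: v) - F (y + t *: v))).
  by apply/funext => h /=; rewrite /shift /= [h *: 1]mulr1 scalerDl addrCA addrC.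
by split; rewrite /derivable /derive quotE.
Qed.

Lemma is_derive_mx_entry (a b : nat) (G : R -> 'M[R]_(a, b)) (t : R) (dG : 'M[R]_(a, b)) i j :
  is_derive t 1 G dG -> is_derive t 1 (fun s => G s i j) (dG i j).
Proof.
move=> [dGt <-].
have quotE : (fun h : R => h^-1 *: (((fun s => G s i j) \o shift t) (h *: 1) - G t i j)) =
   (fun M : 'M[R]_(a, b) => M i j) \o
   (fun h : R => h^-1 *: ((G \o shift t) (h *: 1) - G t)).
  by apply/funext => h /=; rewrite !mxE.
have quot_cvg : (fun h : R => h^-1 *: (((fun s => G s i j) \o shift t) (h *: 1) - G t i j))
   @ 0^' --> ('D_1 G t) i j.
  by rewrite quotE; apply: continuous_cvg; [exact: coord_continuous | exact: dGt].
split; first by apply/cvg_ex; eexists; exact: quot_cvg.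
exact: cvg_lim quot_cvg.
Qed.

Lemma near_is_derive_sum (m : nat) (V : normedModType R) (h dh : 'I_m -> R -> V) :
  (forall j, \forall t \near 0, is_derive (t : R) 1 (h j) (dh j t)) ->
  \forall t \near 0, is_derive (t : R) 1 (\sum_j h j) (\sum_j dh j t).
Proof.
move=> dhj.
have {}dhj : \forall t \near 0, forall j, is_derive (t : R) 1 (h j) (dh j t).
  exact: (@filter_forall R 'I_m (fun j t => is_derive t 1 (h j) (dh j t)) _ _ dhj).
near=> t.
have dht : forall j, is_derive t 1 (h j) (dh j t) by near: t.
exact: is_derive_sum dht.
Unshelve. all: by end_near.
Qed.

Lemma ler_dist_derive_bound (h h' : R -> R) (s t q : R) : s <= t ->
  (forall x, s <= x <= t -> is_derive x 1 h (h' x)) ->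
  (forall x, s <= x <= t -> `|h' x| <= q) ->
  `|h t - h s| <= q * (t - s).
Proof.
move=> st dh h'q.
have [c cst ->] : exists2 c, c \in `[s, t]%R & h t - h s = h' c * (t - s).
  apply: MVT_segment => //.
    by move=> x; rewrite in_itv /= => /andP[sx xt]; apply: dh; rewrite !ltW.
  apply: continuous_in_subspaceT => x; rewrite inE /= in_itv /= => sxt.
  by apply/differentiable_continuous/derivable1_diffP; have [] := dh x sxt.
rewrite normrM [`|t - s|]ger0_norm ?subr_ge0 //; apply: ler_wpM2r; first by rewrite subr_ge0.
by apply: h'q; rewrite in_itv /= in cst.
Qed.

Lemma curve_remainder_lipschitz (a b : nat) (g g' : R -> 'M[R]_(a, b)) (q : R) :
  (\forall t \near 0, is_derive (t : R) 1 g (g' t)) -> {for 0, continuous g'} -> 0 < q ->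
  \forall del \near (0 : R)^'+, forall t t' : R, `|t| <= del -> `|t'| <= del ->
    `|(g t - t *: g' 0) - (g t' - t' *: g' 0)| <= q * `|t - t'|.
Proof.
move=> dg cg' q_gt0.
have g'_near : \forall t \near 0, `|g' 0 - g' t| < q by move/cvgr_dist_lt : cg'; apply.
have [e e_gt0 ball_e] := (nbhs_ballP _ _).1 (filterI dg g'_near).
near=> del => t t'.
have near0 (x : R) : `|x| <= del -> is_derive x 1 g (g' x) /\ `|g' 0 - g' x| < q.
  move=> xdel; apply: ball_e; rewrite /ball /= sub0r normrN.
  apply: le_lt_trans xdel _; near: del; exact: nbhs_right_lt.
wlog tt' : t t' / t <= t'.
  move=> wl; have [/wl//|/ltW/wl + t'del tdel] := leP t t'.
  by rewrite distrC [`|t - t'|]distrC; apply.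
move=> tdel t'del.
have seg (x : R) : t <= x <= t' -> `|x| <= del.
  move: tdel t'del; rewrite !ler_norml => /andP[tl _] /andP[_ t'r] /andP[tx xt'].
  by rewrite (le_trans tl tx) (le_trans xt' t'r).
rewrite distrC [`|t - t'|]distrC ger0_norm ?subr_ge0 //.
apply: mx_norm_le => [|i j]; first by rewrite mulr_ge0 ?subr_ge0 // ltW.
rewrite !mxE.
have := @ler_dist_derive_bound (fun s => g s i j - s * g' 0 i j)
  (fun x => g' x i j - g' 0 i j) t t' q tt'.
apply => x /seg /near0 [dgx g'x].
  have -> : (fun s => g s i j - s * g' 0 i j) = (fun s => g s i j) - g' 0 i j \*: id.
    by apply/funext => s /=; rewrite mulrC.
  have := is_deriveB (is_derive_mx_entry i j dgx) (is_deriveZ (g' 0 i j) (is_derive_id x 1)).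
  by rewrite [_ *: 1]mulr1.
apply: le_trans (ltW g'x); rewrite -normrN opprB.
by have := norm_mx_entry_le (g' x - g' 0) i j; rewrite !mxE.
Unshelve. all: by end_near.
Qed.

Lemma closed_ball_contraction_fixpoint (V : completeNormedModType R) (T : V -> V) (r : R) :
  0 < r ->
  (forall u v, `|u| <= r -> `|v| <= r -> `|T u - T v| <= 2^-1 * `|u - v|) ->
  `|T 0| <= r / 2 -> exists2 u, `|u| <= r & T u = u.
Proof.
move=> r_gt0 T_lip T0.
pose B := [set u : V | `|u| <= r].
have TB : {homo T : u / B u >-> B u}.
  move=> u Bu; rewrite /B /= -(subrK (T 0) (T u)) [r](splitr r).
  apply: le_trans (ler_normD _ _) (lerD _ T0).
  have := T_lip u 0 Bu; rewrite normr0 subr0 => /(_ (ltW r_gt0)) /le_trans; apply.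
  by rewrite mulrC ler_pM2r ?invr_gt0 ?ltr0n.
have B_closed : closed B.
  by apply: (preimage_closed _ (@closed_le _ _)) => u _; exact: norm_continuous.
have T_contraction : is_contraction (mkfun_fun TB).
  exists 2^-1%:nng; split => /=; first by rewrite invf_lt1 ?ltr1n.
  by move=> [u v] [/= Bu Bv]; exact: T_lip.
have B0 : B 0 by rewrite /B /= normr0 ltW.
have [u Bu Tu] := banach_fixed_point T_contraction B_closed (ex_intro _ 0 B0).
by exists u.
Qed.

Lemma sum_curves_cover_ball (d : nat) (g g' : 'I_d -> R -> 'rV[R]_d) :
  (forall c, \forall t \near 0, is_derive (t : R) 1 (g c) (g' c t)) ->
  (forall c, {for 0, continuous (g' c)}) ->
  (forall c, g' c 0 = delta_mx 0 c) ->
  exists2 r, 0 < r & forall y, `|y| <= r ->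
    exists s : 'rV[R]_d, \sum_c (g c (s 0 c) - g c 0) = y.
Proof.
move=> dg cg' g'0.
pose q : R := 2^-1 / d.+1%:R.
have q_gt0 : 0 < q by rewrite divr_gt0 ?invr_gt0 ?ltr0n.
have dq : d%:R * q <= 2^-1.
  by rewrite mulrCA ger_pMr ?invr_gt0 ?ltr0n // ler_pdivrMr ?ltr0n // mul1r ler_nat.
have rem : \forall del \near (0 : R)^'+, forall c t t', `|t| <= del -> `|t'| <= del ->
    `|(g c t - t *: g' c 0) - (g c t' - t' *: g' c 0)| <= q * `|t - t'|.
  by apply: filter_forall => c; exact: curve_remainder_lipschitz.
near (0 : R)^'+ => del.
have del_gt0 : 0 < del by near: del; exact: nbhs_right_gt.
have del_rem : forall c t t', `|t| <= del -> `|t'| <= del ->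
    `|(g c t - t *: g' c 0) - (g c t' - t' *: g' c 0)| <= q * `|t - t'|.
  by near: del; exact: rem.
pose G (s : 'rV[R]_d) := \sum_c (g c (s 0 c) - g c 0).
have GE s : G s - s = \sum_c ((g c (s 0 c) - s 0 c *: g' c 0) - g c 0).
  rewrite {2}(row_sum_delta s) -sumrB; apply: eq_bigr => c _.
  by rewrite g'0 addrAC.
exists (del / 2); first by rewrite divr_gt0.
move=> y y_small.
(* [G s - s] is a sum of [d] first-order remainders, each [q]-Lipschitz on the
   ball of radius [del], so [T] is a 1/2-contraction there. *)
pose T s := s - G s + y.
have T_lip u v : `|u| <= del -> `|v| <= del -> `|T u - T v| <= 2^-1 * `|u - v|.
  move=> u_small v_small.
  have -> : T u - T v = (G v - v) - (G u - u).
    by rewrite /T opprD addrACA subrr addr0 !opprB addrC.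
  rewrite !GE -sumrB; apply: le_trans (ler_norm_sum _ _ _) _.
  apply: le_trans (ler_wpM2r (normr_ge0 _) dq).
  rewrite -mulrA mulr_natl -[X in _ *+ X]card_ord -sumr_const.
  apply: ler_sum => c _; rewrite opprB addrA subrK.
  apply: le_trans (del_rem c _ _ (le_trans (norm_mx_entry_le _ _ _) v_small)
    (le_trans (norm_mx_entry_le _ _ _) u_small)) _.
  rewrite distrC; apply: ler_wpM2l; first exact: ltW.
  by have := norm_mx_entry_le (u - v) 0 c; rewrite !mxE.
have T0 : T 0 = y.
  rewrite /T /G big1 ?subrr ?add0r // => c _.
  by rewrite mxE subrr.
have [s _ Ts] : exists2 s, `|s| <= del & T s = s.
  by apply: closed_ball_contraction_fixpoint => //; rewrite T0.
exists s; move: Ts; rewrite /T -addrA -[X in _ = X]addr0 => /addrI.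
by rewrite addrC => /subr0_eq.
Unshelve. all: by end_near.
Qed.

End RealCurves.

Section Lines.
Variables (R : realType) (V W : normedModType R).

Lemma line_cvg (y v : V) : (fun t : R => y + t *: v) @ 0 --> y.
Proof.
have : {for 0, continuous (fun t : R => y + t *: v)}.
  by apply: continuousD; [exact: cst_continuous | exact: continuousZr_tmp].
by rewrite /prop_for /continuous_at scale0r addr0.
Qed.

Variables (F : V -> W) (U : set V) (y v : V).
Hypotheses (U_open : open U) (Uy : U y) (dF : forall z, U z -> derivable F z v).

Lemma near0_line_is_derive :
  \forall t \near 0, is_derive (t : R) 1 (fun s => F (y + s *: v)) ('D_v F (y + t *: v)).
Proof.
have : \forall t \near (0 : R), U (y + t *: v).
  by apply: line_cvg; apply: open_nbhs_nbhs.
by apply: filterS => t Ut; apply: is_derive_line; exact: dF.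
Qed.

Lemma line_derive_continuous : {for y, continuous ('D_v F)} ->
  {for 0, continuous (fun t : R => 'D_v F (y + t *: v))}.
Proof.
rewrite /prop_for /continuous_at scale0r addr0 => cD.
apply: cvg_comp cD; exact: line_cvg.
Qed.

End Lines.

Section Manifold.
Variables (R : realType) (M : topologicalType) (k : nat) (A : smooth_manifold R M k).

Lemma dimage0 (W : normedModType R) (f : M -> W) (x : M) : dimage A f x 0.
Proof.
have [c xc] := chart_cover A x.
by exists c; split => //; exists 0; rewrite derive0.
Qed.

Lemma dimages_span_inj (d m n : nat) (f : M -> 'rV[R]_d) (x : 'I_m -> M)
    (z : 'I_n -> M) (h : 'I_m -> 'I_n) :
  injective h -> (forall j, z (h j) = x j) ->
  dimages_span A f x -> dimages_span A f z.
Proof.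
move=> h_inj zh span_x w; have [ws [ws_x ->]] := span_x w.
exists (fun i => \sum_(j | h j == i) ws j); split; last first.
  by rewrite (partition_big h xpredT).
move=> i; case: (pickP (fun j => h j == i)) => [j /eqP hj | none].
  rewrite (big_pred1 j) -?hj ?zh //.
  by move=> j'; apply/eqP/eqP => [/h_inj|->].
by rewrite big_pred0 //; exact: dimage0.
Qed.

Lemma smooth_map_line (W : normedModType R) (f : M -> W) (c : chart_idx A)
    (y v : 'rV[R]_k) :
  smooth_map A f -> (chart c @` chart_dom c) y ->
  (\forall t \near 0, is_derive (t : R) 1 (fun s => (f \o chart_inv c) (y + s *: v))
     ('D_v (f \o chart_inv c) (y + t *: v))) /\
  {for 0, continuous (fun t : R => 'D_v (f \o chart_inv c) (y + t *: v))}.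
Proof.
move=> /(_ c) [U_open smooth] Uy; split.
  by apply: near0_line_is_derive U_open Uy _ => z Uz; exact: (smooth [::] z Uz).2.
exact/line_derive_continuous/(smooth [:: v] y Uy).1.
Qed.

Lemma dimages_span_cover_ball (d m : nat) (f : M -> 'rV[R]_d) (x : 'I_m -> M) :
  smooth_map A f -> dimages_span A f x ->
  exists2 r, 0 < r & forall y, `|y| <= r ->
    exists p : 'I_d -> 'I_m -> M, \sum_c \sum_j (f (p c j) - f (x j)) = y.
Proof.
move=> smooth_f span_x.
have [ws ws_e] := choice (fun c : 'I_d => span_x (delta_mx 0 c)).
have : forall cj : 'I_d * 'I_m, exists cv : chart_idx A * 'rV[R]_k,
    chart_dom cv.1 (x cj.2) /\
    ws cj.1 cj.2 = 'D_cv.2 (f \o chart_inv cv.1) (chart cv.1 (x cj.2)).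
  by move=> [c j]; have [ch [xch [v ->]]] := (ws_e c).1 j; exists (ch, v).
case/choice => cv cv_x.
pose F c j := f \o chart_inv (cv (c, j)).1.
pose y c j := chart (cv (c, j)).1 (x j).
pose v c j := (cv (c, j)).2.
have y_chart c j : (chart (cv (c, j)).1 @` chart_dom (cv (c, j)).1) (y c j).
  by exists (x j) => //; exact: (cv_x (c, j)).1.
pose g c := \sum_j (fun t : R => F c j (y c j + t *: v c j)).
pose g' c := \sum_j (fun t : R => 'D_(v c j) (F c j) (y c j + t *: v c j)).
have g_derive c : \forall t \near 0, is_derive (t : R) 1 (g c) (g' c t).
  rewrite /g' fct_sumE; apply: near_is_derive_sum => j.
  exact: (smooth_map_line _ smooth_f (y_chart c j)).1.
have g'_cont c : {for 0, continuous (g' c)}.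
  rewrite /g'; elim/big_ind: _ => [|? ? ? ?|j _].
  - exact: cst_continuous.
  - exact: continuousD.
  - exact: (smooth_map_line _ smooth_f (y_chart c j)).2.
have g'0 c : g' c 0 = delta_mx 0 c.
  rewrite /g' fct_sumE (ws_e c).2; apply: eq_bigr => j _.
  by rewrite scale0r addr0 (cv_x (c, j)).2.
have [r r_gt0 cover] := sum_curves_cover_ball g_derive g'_cont g'0.
exists r => // y0 /cover [s <-].
exists (fun c j => chart_inv (cv (c, j)).1 (y c j + s 0 c *: v c j)).
apply: eq_bigr => c _; rewrite /g !fct_sumE -sumrB; apply: eq_bigr => j _.
by rewrite scale0r addr0 /F /y /= chartK //; exact: (cv_x (c, j)).1.
Qed.

End Manifold.

Lemma family_of_prefixed_seq (T : Type) (m : nat) (x : 'I_m -> T) (s : seq T) :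
  exists z : 'I_(m + size s) -> T,
    (forall j, z (lshift (size s) j) = x j) /\
    forall (V : nmodType) (g : T -> V),
      \sum_i g (z i) = \sum_j g (x j) + \sum_(q <- s) g q.
Proof.
pose z (i : 'I_(m + size s)) :=
  match fintype.split i with inl j => x j | inr k => tnth (in_tuple s) k end.
have z_lshift j : z (lshift (size s) j) = x j.
  by rewrite /z -[lshift _ j]/(unsplit (inl _ j)) unsplitK.
exists z; split => // V g; rewrite big_split_ord /=.
congr (_ + _); first by apply: eq_bigr => j _; rewrite z_lshift.
rewrite (big_tuple _ _ (in_tuple s)); apply: eq_bigr => k _.
by rewrite /z -[rshift _ k]/(unsplit (inr _ k)) unsplitK.
Qed.

Lemma sumr_flatten_nseq (T : Type) (V : nmodType) (g : T -> V) (I : finType)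
    (cnt : I -> nat) (pt : I -> T) :
  \sum_(q <- flatten [seq nseq (cnt i) (pt i) | i <- enum I]) g q =
  \sum_i g (pt i) *+ cnt i.
Proof.
rewrite big_flatten big_map big_enum /=; apply: eq_bigr => i _.
by elim: (cnt i) => [|k IH]; rewrite ?big_nil //= big_cons IH mulrS.
Qed.

Lemma size_flatten_nseq (T : Type) (I : finType) (cnt : I -> nat) (pt : I -> T) :
  size (flatten [seq nseq (cnt i) (pt i) | i <- enum I]) = (\sum_i cnt i)%N.
Proof.
rewrite size_flatten sumnE /shape -map_comp big_map big_enum /=.
by apply: eq_bigr => i _; rewrite /= size_nseq.
Qed.

(* The witness holds [cnt j - (1 + d * K)] copies of each [x j] and [K] copies
   of each [p c j]. *)
Lemma balanced_seq (T : Type) (d m K : nat) (x : 'I_m -> T) (p : 'I_d -> 'I_m -> T)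
    (cnt : 'I_m -> nat) :
  (forall j, 1 + d * K <= cnt j)%N ->
  exists s : seq T, (m + size s = \sum_j cnt j)%N /\
    forall (V : zmodType) (g : T -> V),
      (\sum_c \sum_j (g (p c j) - g (x j))) *+ K = - \sum_j g (x j) *+ cnt j ->
      \sum_j g (x j) + \sum_(q <- s) g q = 0.
Proof.
move=> cnt_ge; pose T0 := (1 + d * K)%N.
exists (flatten [seq nseq (cnt j - T0) (x j) | j <- enum 'I_m] ++
        flatten [seq nseq K (p cj.1 cj.2) | cj <- enum {: 'I_d * 'I_m}]); split.
  have : (\sum_j cnt j = \sum_j (cnt j - T0) + m * T0)%N.
    rewrite -[m in (m * T0)%N]card_ord -sum_nat_const -big_split /=.
    by apply: eq_bigr => j _; rewrite subnK.
  rewrite size_cat !size_flatten_nseq sum_nat_const card_prod !card_ord /T0; lia.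
move=> V g moved_sum.
rewrite big_cat !sumr_flatten_nseq sumrMnl.
rewrite -(pair_big xpredT xpredT (fun c j => g (p c j))) /=.
have -> : \sum_c \sum_j g (p c j) =
    \sum_c \sum_j (g (p c j) - g (x j)) + (\sum_j g (x j)) *+ d.
  rewrite -[d in _ *+ d]card_ord -sumr_const -big_split; apply: eq_bigr => c _.
  by rewrite -big_split; apply: eq_bigr => j _; rewrite /= subrK.
rewrite mulrnDl moved_sum -mulrnA -sumrMnl addrA addrCA.
suff -> : \sum_j g (x j) *+ cnt j = \sum_j g (x j) + \sum_j g (x j) *+ (cnt j - T0) +
    \sum_j g (x j) *+ (d * K) by rewrite addNr.
rewrite -!big_split; apply: eq_bigr => j _; rewrite /= -mulrS -mulrnDr.
by congr (_ *+ _); have := cnt_ge j; rewrite /T0; lia.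
Qed.

Section Weights.
Variable R : realType.

Lemma conv_hull_interior_pos_weights (d m : nat) (p : 'I_m -> 'rV[R]_d) :
  interior (conv_hull p) 0 ->
  exists lam : 'I_m -> R, [/\ forall j, 0 < lam j, \sum_j lam j = 1 &
    \sum_j lam j *: p j = 0].
Proof.
move=> /(nbhs_ballP _ _).1 [e e_gt0 ball_hull].
have hull_ball (u : 'rV[R]_d) : `|u| < e -> conv_hull p u.
  by move=> u_small; apply: ball_hull; rewrite -ball_normE /= sub0r normrN.
have m_gt0 : (0 < m)%N.
  have [l [_ [l_sum1 _]]] := hull_ball 0 ltac:(by rewrite normr0).
  case: m p l l_sum1 {ball_hull hull_ball} => // p l.
  by rewrite big_ord0 => /eqP; rewrite eq_sym oner_eq0.
(* The point [- eps *: b] (with [b] the barycentre) still lies in the hull;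
   adding [eps / m] to each of its weights cancels the [- eps *: b] and makes
   all weights positive. *)
pose b := m%:R^-1 *: \sum_j p j.
pose eps := e / (2 * (`|b| + 1)).
have eps_gt0 : 0 < eps by rewrite divr_gt0 // mulr_gt0 // ltr_wpDl.
have [l [l_ge0 [l_sum1 l_p]]] : conv_hull p (- (eps *: b)).
  apply: hull_ball; rewrite normrN normrZ gtr0_norm //.
  rewrite /eps -mulrA gtr_pMr // mulrC ltr_pdivrMr ?mulr_gt0 ?ltr_wpDl // mul1r.
  have := normr_ge0 b; lra.
have m_pos : 0 < m%:R :> R by rewrite ltr0n.
exists (fun j => (l j + eps / m%:R) / (1 + eps)); split.
- by move=> j; rewrite divr_gt0 // ?ltr_wpDl // ?divr_gt0 // addr_gt0.
- rewrite -mulr_suml big_split /= l_sum1 sumr_const card_ord -[_ *+ m]mulr_natr.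
  by rewrite divfK ?gt_eqF // divff // gt_eqF // addr_gt0.
- under eq_bigr => j _ do rewrite mulrC -scalerA scalerDl.
  rewrite -scaler_sumr big_split /= -l_p -scaler_sumr.
  by rewrite -[(eps / m%:R) *: _]scalerA -/b addNr scaler0.
Qed.

Lemma counts_near_weights (m T : nat) (lam : 'I_m -> R) :
  (forall j, 0 < lam j) -> \sum_j lam j = 1 ->
  exists N, forall n, (N <= n)%N -> exists cnt : 'I_m -> nat,
    [/\ forall j, (T <= cnt j)%N, (\sum_j cnt j)%N = n &
        forall j, `|(cnt j)%:R - n%:R * lam j| <= m%:R].
Proof.
case: m lam => [lam _|m lam lam_gt0 lam_sum1].
  by rewrite big_ord0 => /esym/eqP; rewrite oner_eq0.
exists (\sum_j (Num.truncn (T%:R / lam j)).+1)%N => n n_large.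
pose tr j := Num.truncn (n%:R * lam j).
have nlam_ge0 j : 0 <= n%:R * lam j by rewrite mulr_ge0 // ltW.
have tr_le j : (tr j)%:R <= n%:R * lam j by rewrite truncn_le.
have tr_gt j : n%:R * lam j < (tr j).+1%:R by exact: truncnS_gt.
have tr_ge j : (T <= tr j)%N.
  rewrite /tr truncn_ge_nat // -ler_pdivrMr //; apply: ltW.
  apply: (lt_le_trans (truncnS_gt _)); rewrite ler_nat (leq_trans _ n_large) //.
  by rewrite (bigD1 j) //= leq_addr.
have sum_nlam : \sum_j n%:R * lam j = n%:R :> R by rewrite -mulr_sumr lam_sum1 mulr1.
have sum_tr : (\sum_j tr j <= n)%N.
  by rewrite -(ler_nat R) natr_sum -sum_nlam; exact: ler_sum.
have n_lt : (n < \sum_j tr j + m.+1)%N.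
  have : (\sum_j (tr j).+1 = \sum_j tr j + m.+1)%N.
    by under eq_bigr do rewrite -addn1; rewrite big_split /= sum1_card card_ord.
  move <-; rewrite -(ltr_nat R) natr_sum -sum_nlam.
  apply: ltr_sum => [|j _]; last exact: tr_gt.
  by apply/hasP; exists ord0; rewrite ?mem_index_enum.
(* Round every [n * lam j] down and give the total deficit [L <= m] to [ord0]. *)
pose L := (n - \sum_j tr j)%N.
exists (fun j => tr j + (j == ord0) * L)%N; split.
- by move=> j; rewrite (leq_trans (tr_ge j)) ?leq_addr.
- rewrite big_split /=.
  have -> : (\sum_(j < m.+1) (j == ord0) * L)%N = L.
    by rewrite (bigD1 ord0) //= mul1n big1 ?addn0 // => j /negbTE ->.
  by rewrite /L subnKC.
- move=> j; have := tr_le j; have := tr_gt j.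
  have : ((j == ord0) * L)%:R <= m.+1%:R :> R.
    by rewrite ler_nat; case: (j == ord0); rewrite ?mul1n ?mul0n // /L; lia.
  have := ler0n R ((j == ord0) * L).
  have := ler0n R m; rewrite natrD -!natr1 ler_norml => ? ? ? ? ?.
  apply/andP; split; lra.
Qed.

Lemma norm_sum_mulrn_le (V : normedModType R) (m n : nat) (p : 'I_m -> V)
    (lam : 'I_m -> R) (cnt : 'I_m -> nat) (e : R) :
  \sum_j lam j *: p j = 0 -> (forall j, `|(cnt j)%:R - n%:R * lam j| <= e) ->
  `|\sum_j p j *+ cnt j| <= e * \sum_j `|p j|.
Proof.
move=> lam_p cnt_near.
have -> : \sum_j p j *+ cnt j = \sum_j ((cnt j)%:R - n%:R * lam j) *: p j.
  under [RHS]eq_bigr do rewrite scalerBl -scalerA.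
  by rewrite sumrB -scaler_sumr lam_p scaler0 subr0; apply: eq_bigr => j _; rewrite scaler_nat.
rewrite mulr_sumr; apply: le_trans (ler_norm_sum _ _ _) _; apply: ler_sum => j _.
by rewrite normrZ ler_wpM2r.
Qed.

End Weights.

Theorem theorem2p10 (R : realType) (d k : nat) (M : topologicalType)
  (A : smooth_manifold R M k) (f : M -> 'rV[R]_d) (m : nat) (x : 'I_m -> M) :
  smooth_map A f ->
  interior (conv_hull (fun i => f (x i))) 0 ->
  dimages_span A f x ->
  exists N : nat, forall n : nat, (N <= n)%N ->
    exists z : 'I_n -> M, \sum_(i < n) f (z i) = 0 /\ dimages_span A f z.
Proof.
move=> smooth_f hull_int span_x.
have [lam [lam_gt0 lam_sum1 lam_p]] := conv_hull_interior_pos_weights hull_int.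
have [r r_gt0 cover] := dimages_span_cover_ball smooth_f span_x.
pose K := (Num.truncn (m%:R * (\sum_j `|f (x j)|) / r)).+1.
have [N large] := counts_near_weights (1 + d * K) lam_gt0 lam_sum1.
exists N => n /large [cnt [cnt_ge cnt_sum cnt_near]].
pose S := \sum_j f (x j) *+ cnt j.
have [p sum_p] : exists p : 'I_d -> 'I_m -> M,
    \sum_c \sum_j (f (p c j) - f (x j)) = - (K%:R^-1 *: S).
  apply: cover; rewrite normrN normrZ normfV ger0_norm // mulrC ler_pdivrMr ?ltr0n //.
  apply: le_trans (norm_sum_mulrn_le lam_p cnt_near) _.
  by rewrite [leRHS]mulrC -ler_pdivrMr //; apply: ltW; exact: truncnS_gt.
have [s [size_s sum_s]] := balanced_seq x p cnt_ge.
have [z [z_x sum_z]] := family_of_prefixed_seq x s.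
rewrite -cnt_sum -size_s; exists z; split.
  rewrite sum_z; apply: sum_s.
  by rewrite sum_p mulNrn -scaler_nat scalerA mulfV ?scale1r // pnatr_eq0.
exact: dimages_span_inj (@lshift_inj _ _) z_x span_x.
Qed.
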